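(* Let $A_2\subset[0,1]$ be a closed $\times2\bmod1$ invariant set with $\dim_{\mathrm H}A_2=s\in(0,1]$ and let $s'\in[0,s)$. Then for every $\varepsilon>0$ there exist $m\in\mathbb{N}$ and two closed $\times2^m\bmod1$ invariant sets $A_2',A_2''\subset[0,1]$ such that \[ A_2\subset A_2'+A_2''\pmod 1,\qquad |\dim_{\mathrm H}A_2'-s'|\le\varepsilon,\qquad \dim_{\mathrm H}A_2\ge\dim_{\mathrm H}A_2'+\dim_{\mathrm H}A_2''-\varepsilon . \]
   Context: A closed set $A\subset[0,1]$ is called $\times p\bmod 1$ invariant ($p\ge2$ an integer) if $\{pa\}\in A$ for every $a\in A$, where $\{x\}$ is the fractional part. $A_2\subset A_2'+A_2''\pmod1$ means every element of $A_2$ is congruent mod $1$ to $a'+a''$ for some $a'\in A_2'$, $a''\in A_2''$. *)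

From Stdlib Require Import Reals Rtopology R_Ifp.
Open Scope R_scope.

Definition in_unit_interval (A : R -> Prop) : Prop :=
  forall a, A a -> 0 <= a <= 1.

Definition times_p_invariant (p : nat) (A : R -> Prop) : Prop :=
  forall a, A a -> A (frac_part (INR p * a)).

Definition subset_sum_mod1 (A A' A'' : R -> Prop) : Prop :=
  forall a, A a -> exists a' a'' (k : Z), A' a' /\ A'' a'' /\ a = a' + a'' + IZR k.

(* The diameter of
   U_n is bounded by r_n (0 < r_n <= delta); taking r_n slightly larger than
   the diameter makes this equivalent to the usual definition of the
   s-dimensional Hausdorff measure vanishing. *)
Definition H_null (s : R) (E : R -> Prop) : Prop :=
  forall eps delta, 0 < eps -> 0 < delta ->
  exists (U : nat -> R -> Prop) (r : nat -> R),
    (forall n, 0 < r n <= delta) /\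
    (forall n x y, U n x -> U n y -> Rabs (x - y) <= r n) /\
    (forall x, E x -> exists n, U n x) /\
    (forall N, sum_f_R0 (fun n => Rpower (r n) s) N <= eps).

Definition is_hdim (E : R -> Prop) (d : R) : Prop :=
  (forall s, 0 <= s -> H_null s E -> d <= s) /\
  (forall t, (forall s, 0 <= s -> H_null s E -> t <= s) -> t <= d).

From Stdlib Require Import Reals Rtopology R_Ifp Lra Lia List ZArith.
From Stdlib Require Import ClassicalEpsilon Classical.
Import ListNotations.
Open Scope R_scope.

(* Let t be slightly larger than s = dim A2.  Since A2 is x2-invariant and H^t(A2) = 0, a light
   cover of A2 by dyadic intervals propagates along the orbit, so at most C 2^(n t) dyadic intervals
   of level n meet A2.  Take m = k + r with k/m close to s'/s and split each base-2^m digit of a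
   point of A2 into its top k and bottom r binary digits: A2 lies in A2' + A2'', where A2' and
   A2'' are the closed x2^m-invariant sets of expansions using only the blocks that occur.  Counting
   blocks gives m dim A2' <= c + k t and m dim A2'' <= c + r t, and covering a sum set gives
   m dim A2 <= m dim A2' + c + r t; for m large this yields both inequalities. *)

Lemma Int_part_bounds x : IZR (Int_part x) <= x < IZR (Int_part x) + 1.
Proof. destruct (base_Int_part x). lra. Qed.

Lemma Int_part_eq x z : IZR z <= x < IZR z + 1 -> Int_part x = z.
Proof. intros H. symmetry. apply Int_part_spec. lra. Qed.

Lemma Int_part_plus_IZR x z : Int_part (x + IZR z) = (Int_part x + z)%Z.
Proof. apply Int_part_eq. rewrite plus_IZR. pose proof (Int_part_bounds x). lra. Qed.

Lemma Int_part_range x (n : Z) : 0 <= x < IZR n -> (0 <= Int_part x <= n - 1)%Z.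
Proof.
  intros Hx. pose proof (Int_part_bounds x).
  assert (H0 : IZR (-1) < IZR (Int_part x)) by (simpl; lra).
  assert (H1 : IZR (Int_part x) < IZR n) by lra.
  apply lt_IZR in H0, H1. lia.
Qed.

Lemma frac_part_bounds x : 0 <= frac_part x < 1.
Proof. unfold frac_part. pose proof (Int_part_bounds x). lra. Qed.

Lemma frac_part_plus_IZR x z : frac_part (x + IZR z) = frac_part x.
Proof. unfold frac_part. rewrite Int_part_plus_IZR, plus_IZR. lra. Qed.

Lemma frac_part_IZR z : frac_part (IZR z) = 0.
Proof. rewrite <- (Rplus_0_l (IZR z)), frac_part_plus_IZR. apply fp_R0. Qed.

Lemma frac_part_id x : 0 <= x < 1 -> frac_part x = x.
Proof. intros H. unfold frac_part. rewrite (Int_part_eq x 0); simpl; lra. Qed.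

Lemma frac_part_mult_IZR (n : Z) y : frac_part (IZR n * frac_part y) = frac_part (IZR n * y).
Proof.
  replace (IZR n * y) with (IZR n * frac_part y + IZR (n * Int_part y)).
  - now rewrite frac_part_plus_IZR.
  - unfold frac_part. rewrite mult_IZR. ring.
Qed.

Lemma IZR_pow2 n : IZR (2 ^ Z.of_nat n) = 2 ^ n.
Proof. now rewrite <- pow_IZR. Qed.

Lemma INR_pow2 n : INR (2 ^ n) = 2 ^ n.
Proof. now rewrite pow_INR. Qed.

Lemma pow2_pos n : 0 < 2 ^ n.
Proof. apply pow_lt. lra. Qed.

Lemma pow2_ge1 n : 1 <= 2 ^ n.
Proof. apply pow_R1_Rle. lra. Qed.

Lemma inv_pow2_pos m : 0 < / 2 ^ m.
Proof. apply Rinv_0_lt_compat, pow2_pos. Qed.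

Lemma inv_pow2_lt1 m : (1 <= m)%nat -> / 2 ^ m < 1.
Proof.
  intros Hm. rewrite <- Rinv_1. apply Rinv_lt_contravar; rewrite ?Rmult_1_l; [apply pow2_pos|].
  destruct m as [|m]; [lia|]. simpl. pose proof (pow2_ge1 m). lra.
Qed.

(* The binary digits of [y] in positions [p+1 .. p+r] are those of [2^p y] after the point. *)
Lemma Int_part_pow2_add p r y :
  Int_part (2 ^ (p + r) * y) =
  (2 ^ Z.of_nat r * Int_part (2 ^ p * y) + Int_part (2 ^ r * frac_part (2 ^ p * y)))%Z.
Proof.
  replace (2 ^ (p + r) * y) with
    (2 ^ r * frac_part (2 ^ p * y) + IZR (2 ^ Z.of_nat r * Int_part (2 ^ p * y))).
  - rewrite Int_part_plus_IZR. lia.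
  - rewrite mult_IZR, IZR_pow2, pow_add. unfold frac_part. ring.
Qed.

Lemma Int_part_pow2_range y n : 0 <= y <= 1 -> (0 <= Int_part (2 ^ n * y) <= 2 ^ Z.of_nat n)%Z.
Proof.
  intros Hy. pose proof (pow2_pos n).
  assert (Hr : 0 <= 2 ^ n * y < IZR (2 ^ Z.of_nat n + 1)) by (rewrite plus_IZR, IZR_pow2; nra).
  apply Int_part_range in Hr. lia.
Qed.

Lemma Int_part_pow2_frac_range y n :
  (0 <= Int_part (2 ^ n * frac_part y) <= 2 ^ Z.of_nat n - 1)%Z.
Proof.
  apply Int_part_range. pose proof (frac_part_bounds y). pose proof (pow2_pos n).
  rewrite IZR_pow2. nra.
Qed.

Lemma times2_invariant_pow2 (A : R -> Prop) : in_unit_interval A -> times_p_invariant 2 A ->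
  forall n y, A y -> A (frac_part (2 ^ n * y)).
Proof.
  intros HU HA n. induction n as [|n IH]; intros y Hy.
  - rewrite pow_O, Rmult_1_l. destruct (Req_dec y 1) as [->|Hne].
    + apply HA in Hy. rewrite Rmult_1_r, INR_IZR_INZ, frac_part_IZR in Hy.
      now rewrite (frac_part_IZR 1).
    + pose proof (HU y Hy). rewrite frac_part_id; [exact Hy|lra].
  - replace (2 ^ S n * y) with (IZR 2 * (2 ^ n * y)) by (simpl; ring).
    rewrite <- frac_part_mult_IZR. exact (HA _ (IH y Hy)).
Qed.

Lemma pow_eventually_below q x : 0 <= q < 1 -> 0 < x ->
  exists N, forall n, (N <= n)%nat -> q ^ n < x.
Proof.
  intros Hq Hx. destruct (pow_lt_1_zero q ltac:(rewrite Rabs_right; lra) x Hx) as [N HN].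
  exists N. intros n Hn. specialize (HN n Hn).
  now rewrite Rabs_right in HN by (apply Rle_ge, pow_le; lra).
Qed.

Lemma pow_level q l : 0 < q < 1 -> 0 < l <= 1 -> exists n, l <= q ^ n /\ q ^ S n < l.
Proof.
  intros Hq Hl. destruct (pow_eventually_below q l ltac:(lra) ltac:(lra)) as [N HN].
  specialize (HN N (le_n N)). induction N as [|N IH]; [simpl in HN; lra|].
  destruct (Rlt_or_le (q ^ N) l); [now apply IH | now exists N].
Qed.

Lemma Rpower_pos x y : 0 < Rpower x y.
Proof. apply exp_pos. Qed.

Lemma Rpower_ge1 x : 0 <= x -> 1 <= Rpower 2 x.
Proof. intros H. rewrite <- (Rpower_O 2) by lra. apply Rle_Rpower; lra. Qed.

Lemma Rpower_le1_antimono r a b : 0 < r <= 1 -> a <= b -> Rpower r b <= Rpower r a.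
Proof.
  intros [Hr0 Hr1] Hab. unfold Rpower.
  assert (ln r <= 0).
  { rewrite <- ln_1. destruct Hr1 as [Hr1|Hr1]; [left; now apply ln_increasing | subst; lra]. }
  assert (Hle : b * ln r <= a * ln r) by nra.
  destruct Hle as [Hlt|Heq]; [left; now apply exp_increasing | rewrite Heq; lra].
Qed.

Lemma Rpower_inv_exp x s : 0 < x -> 0 < s -> Rpower (Rpower x (/ s)) s = x.
Proof. intros. rewrite Rpower_mult, Rinv_l by lra. now apply Rpower_1. Qed.

Lemma Rpower_pow_base x n s : 0 < x -> Rpower (x ^ n) s = Rpower x s ^ n.
Proof.
  intros Hx. rewrite <- (Rpower_pow n x Hx), Rpower_mult, <- Rpower_pow by apply Rpower_pos.
  rewrite Rpower_mult. f_equal. ring.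
Qed.

Lemma inv_pow2_Rpower m : / 2 ^ m = Rpower 2 (- INR m).
Proof. rewrite Rpower_Ropp, Rpower_pow by lra. reflexivity. Qed.

Definition lsum (l : list R) : R := fold_right Rplus 0 l.

Lemma lsum_app l1 l2 : lsum (l1 ++ l2) = lsum l1 + lsum l2.
Proof. induction l1; simpl; lra. Qed.

Lemma lsum_flat_map {A B} (f : A -> list B) (g : B -> R) l :
  lsum (map g (flat_map f l)) = lsum (map (fun a => lsum (map g (f a))) l).
Proof. induction l; simpl; auto. now rewrite map_app, lsum_app, IHl. Qed.

Lemma lsum_le {A} (f g : A -> R) l : (forall a, In a l -> f a <= g a) ->
  lsum (map f l) <= lsum (map g l).
Proof.
  induction l as [|a l IH]; simpl; intros H; [lra|].
  pose proof (H a (or_introl eq_refl)). pose proof (IH (fun x Hx => H x (or_intror Hx))). lra.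
Qed.

Lemma lsum_const {A} (c : R) (l : list A) : lsum (map (fun _ => c) l) = INR (length l) * c.
Proof.
  induction l as [|a l IH]; [simpl; lra|].
  cbn [map lsum fold_right length]. fold (lsum (map (fun _ => c) l)). rewrite IH, S_INR. lra.
Qed.

Lemma lsum_nonneg {A} (f : A -> R) l : (forall a, In a l -> 0 <= f a) -> 0 <= lsum (map f l).
Proof.
  intros H. eapply Rle_trans; [|exact (lsum_le (fun _ => 0) f l H)].
  rewrite lsum_const. lra.
Qed.

Lemma lsum_scal {A} (c : R) (f : A -> R) l : lsum (map (fun a => c * f a) l) = c * lsum (map f l).
Proof. induction l; simpl; [ring|]. rewrite IHl. ring. Qed.

Lemma lsum_seq (g : nat -> R) N : lsum (map g (seq 0 (S N))) = sum_f_R0 g N.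
Proof. induction N; [simpl; ring|]. rewrite seq_S, map_app, lsum_app, IHN. simpl. ring. Qed.

Lemma fold_max_ge (l : list nat) x : In x l -> (x <= fold_right max 0 l)%nat.
Proof. induction l; simpl; [tauto|]. intros [->|H]; [lia|]. apply IHl in H. lia. Qed.

(* [H_null] with finite covers by closed intervals [[fst p, snd p]]; equivalent to it on compact sets. *)
Definition finite_cover_null (s : R) (E : R -> Prop) : Prop :=
  forall eta delta, 0 < eta -> 0 < delta ->
  exists l : list (R * R),
    (forall p, In p l -> 0 < snd p - fst p <= delta) /\
    (forall x, E x -> exists p, In p l /\ fst p <= x <= snd p) /\
    lsum (map (fun p => Rpower (snd p - fst p) s) l) <= eta.

Lemma sum_nth_error_le {A} (l : list A) (f : A -> R) N : (forall a, In a l -> 0 <= f a) ->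
  sum_f_R0 (fun n => match nth_error l n with Some p => f p | None => 0 end) N <= lsum (map f l).
Proof.
  revert N; induction l as [|a l IH]; intros N H.
  - rewrite (sum_eq _ (fun _ => 0)) by (intros i _; destruct i; reflexivity).
    rewrite sum_cte. simpl. lra.
  - destruct N as [|N].
    + simpl. pose proof (lsum_nonneg f l (fun x Hx => H x (or_intror Hx))). lra.
    + rewrite decomp_sum by lia. simpl.
      pose proof (IH N (fun x Hx => H x (or_intror Hx))). lra.
Qed.

Lemma sum_geom_half N : sum_f_R0 (fun n => (/ 2) ^ S n) N = 1 - (/ 2) ^ S N.
Proof. induction N; [simpl; lra|]. rewrite tech5, IHN. simpl. lra. Qed.

(* The finite cover is padded with empty sets of radii [tiny n], whose [s]-powers sum to [eta/2]. *)
Lemma H_null_of_finite_cover_null s E : 0 < s -> finite_cover_null s E -> H_null s E.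
Proof.
  intros Hs HF eps delta He Hd.
  destruct (HF (eps / 2) delta ltac:(lra) Hd) as [l [Hl1 [Hl2 Hl3]]].
  set (tiny n := Rmin delta (Rpower (eps / 2 * (/ 2) ^ S n) (/ s))).
  assert (Htiny : forall n, 0 < tiny n <= delta).
  { intros n. split; [apply Rmin_pos; [lra | apply Rpower_pos] | apply Rmin_l]. }
  assert (Htiny_s : forall n, Rpower (tiny n) s <= eps / 2 * (/ 2) ^ S n).
  { intros n. assert (0 < eps / 2 * (/ 2) ^ S n) by (apply Rmult_lt_0_compat; [lra | apply pow_lt; lra]).
    rewrite <- (Rpower_inv_exp (eps / 2 * (/ 2) ^ S n) s) by lra.
    apply Rle_Rpower_l; [lra | split; [apply Htiny | apply Rmin_r]]. }
  exists (fun n y => match nth_error l n with Some p => fst p <= y <= snd p | None => False end).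
  exists (fun n => match nth_error l n with Some p => snd p - fst p | None => tiny n end).
  split; [|split; [|split]].
  - intros n. destruct (nth_error l n) eqn:En; [apply Hl1; eapply nth_error_In; eauto | apply Htiny].
  - intros n x y. destruct (nth_error l n); [|tauto]. intros. apply Rabs_le. lra.
  - intros x Hx. destruct (Hl2 x Hx) as [p [Hp1 Hp2]].
    destruct (In_nth_error l p Hp1) as [n Hn]. exists n. now rewrite Hn.
  - intros N. eapply Rle_trans.
    { apply sum_Rle with (Bn := fun n =>
        (match nth_error l n with Some p => Rpower (snd p - fst p) s | None => 0 end)
        + eps / 2 * (/ 2) ^ S n).
      intros n _. pose proof (Htiny_s n).
      assert (0 < eps / 2 * (/ 2) ^ S n) by (apply Rmult_lt_0_compat; [lra | apply pow_lt; lra]).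
      destruct (nth_error l n); lra. }
    rewrite sum_plus.
    pose proof (sum_nth_error_le l (fun p => Rpower (snd p - fst p) s) N
      (fun _ _ => Rlt_le _ _ (Rpower_pos _ _))).
    assert (Hg : sum_f_R0 (fun n => eps / 2 * (/ 2) ^ S n) N = eps / 2 * (1 - (/ 2) ^ S N)).
    { rewrite <- sum_geom_half, scal_sum. apply sum_eq. intros; ring. }
    assert (0 < (/ 2) ^ S N) by (apply pow_lt; lra). nra.
Qed.

Lemma compact_nat_cover (E : R -> Prop) (V : nat -> R -> Prop) :
  compact E -> (forall n, open_set (V n)) -> (forall x, E x -> exists n, V n x) ->
  exists N, forall x, E x -> exists n, (n <= N)%nat /\ V n x.
Proof.
  intros HC HV Hcov.
  pose (ff := fun x y => exists n : nat, x = INR n /\ V n y).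
  assert (Hdom : forall x, (exists y, ff x y) -> (fun x => exists n : nat, x = INR n) x).
  { intros x [y [n [Hn _]]]. eauto. }
  destruct (HC (mkfamily _ ff Hdom)) as [D [HDc [l Hl]]].
  - split.
    + intros y Hy. destruct (Hcov y Hy) as [n Hn]. exists (INR n), n. auto.
    + intros x y [n [Hxn Hy]]. destruct (HV n y Hy) as [d Hd].
      exists d. intros y' Hy'. exists n. split; [exact Hxn | now apply Hd].
  - exists (fold_right max 0%nat (map (fun x => Z.to_nat (Int_part x)) l)).
    intros y Hy. destruct (HDc y Hy) as [x [[n [Hxn Hn]] HDx]].
    exists n. split; [|exact Hn].
    assert (Hin : In x l) by (apply Hl; split; [exists n | ]; auto).
    replace n with (Z.to_nat (Int_part x)) by (rewrite Hxn, Int_part_INR; apply Nat2Z.id).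
    apply fold_max_ge, (in_map (fun x => Z.to_nat (Int_part x))), Hin.
Qed.

Lemma open_set_ball c r : open_set (fun y => Rabs (y - c) < r).
Proof.
  intros y Hy. exists (mkposreal _ (proj2 (Rlt_0_minus _ _) Hy)). intros z Hz.
  unfold disc in Hz. simpl in Hz.
  pose proof (Rabs_triang (z - y) (y - c)). replace (z - y + (y - c)) with (z - c) in * by ring.
  lra.
Qed.

(* The sets of a countable cover are replaced by intervals of four times their radius around
   chosen centres, and compactness extracts a finite subcover. *)
Lemma finite_cover_null_of_compact s E : compact E -> 0 <= s -> H_null s E -> finite_cover_null s E.
Proof.
  intros HC Hs HH eta delta He Hd.
  assert (H4 : 0 < Rpower 4 s) by apply Rpower_pos.
  destruct (HH (eta / Rpower 4 s) (delta / 4)) as [U [r [Hr [Hdiam [Hcov Hsum]]]]].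
  { apply Rdiv_lt_0_compat; lra. } { lra. }
  assert (Hc : forall n, exists c, forall z, U n z -> Rabs (z - c) <= r n).
  { intros n. destruct (classic (exists z, U n z)) as [[z0 Hz0]|Hno].
    - exists z0. intros z Hz. now apply Hdiam.
    - exists 0. intros z Hz. exfalso. eauto. }
  pose (c n := proj1_sig (constructive_indefinite_description _ (Hc n))).
  assert (Hcs : forall n z, U n z -> Rabs (z - c n) <= r n).
  { intros n. exact (proj2_sig (constructive_indefinite_description _ (Hc n))). }
  destruct (compact_nat_cover E (fun n y => Rabs (y - c n) < 2 * r n) HC)
    as [N HN]; [intros n; apply open_set_ball | |].
  { intros y Hy. destruct (Hcov y Hy) as [n Hn]. exists n.
    pose proof (Hcs n y Hn). pose proof (Hr n). lra. }
  exists (map (fun n => (c n - 2 * r n, c n + 2 * r n)) (seq 0 (S N))).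
  split; [|split].
  - intros p Hp. apply in_map_iff in Hp. destruct Hp as [n [<- _]]. simpl.
    pose proof (Hr n). lra.
  - intros y Hy. destruct (HN y Hy) as [n [HnN Hn]].
    exists (c n - 2 * r n, c n + 2 * r n). split.
    + apply in_map_iff. exists n. split; [reflexivity | apply in_seq; lia].
    + apply Rabs_def2 in Hn. simpl. lra.
  - rewrite map_map.
    transitivity (lsum (map (fun n => Rpower 4 s * Rpower (r n) s) (seq 0 (S N)))).
    + right. f_equal. apply map_ext. intros n. simpl.
      replace (c n + 2 * r n - (c n - 2 * r n)) with (4 * r n) by ring.
      symmetry. apply Rpower_mult_distr; [lra | apply Hr].
    + rewrite lsum_scal, lsum_seq.
      replace eta with (Rpower 4 s * (eta / Rpower 4 s)) by (field; lra).
      apply Rmult_le_compat_l; [lra | apply Hsum].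
Qed.

Lemma H_null_mono s s' E : H_null s E -> s <= s' -> H_null s' E.
Proof.
  intros HH Hss eps delta He Hd.
  destruct (HH eps (Rmin delta 1) He (Rmin_pos _ _ Hd Rlt_0_1)) as [U [r [Hr [H1 [H2 H3]]]]].
  exists U, r. split; [|split; [|split]]; auto.
  - intros n. pose proof (Hr n). pose proof (Rmin_l delta 1). lra.
  - intros N. eapply Rle_trans; [|apply (H3 N)]. apply sum_Rle. intros n _.
    apply Rpower_le1_antimono; auto. pose proof (Hr n). pose proof (Rmin_r delta 1). lra.
Qed.

Lemma hdim_exists E s : 0 <= s -> H_null s E -> exists d, is_hdim E d.
Proof.
  intros Hs HH.
  destruct (completeness (fun x => exists s, x = - s /\ 0 <= s /\ H_null s E)) as [m [Hub Hlub]].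
  - exists 0. intros x [s' [-> [Hs' _]]]. lra.
  - exists (- s), s. auto.
  - exists (- m). split.
    + intros s' Hs' HHs'. assert (- s' <= m) by (apply Hub; exists s'; auto). lra.
    + intros t Ht. assert (m <= - t); [|lra].
      apply Hlub. intros x [s' [-> [Hs' HHs']]]. pose proof (Ht s' Hs' HHs'). lra.
Qed.

Lemma hdim_nonneg E d : is_hdim E d -> 0 <= d.
Proof. intros [_ H]. now apply H. Qed.

Lemma H_null_gt_hdim E d t : is_hdim E d -> d < t -> H_null t E.
Proof.
  intros [H1 H2] Hdt. apply NNPP. intros Hn.
  assert (t <= d); [|lra]. apply H2. intros s Hs HHs.
  destruct (Rle_or_lt t s) as [h|h]; auto. exfalso. apply Hn. eapply H_null_mono; eauto. lra.
Qed.

Lemma hdim_le E d s0 : is_hdim E d -> 0 <= s0 -> (forall s, s0 < s -> H_null s E) -> d <= s0.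
Proof.
  intros [H1 _] Hs0 H. destruct (Rle_or_lt d s0) as [h|h]; auto.
  assert (d <= (d + s0) / 2) by (apply H1; [lra | apply H; lra]). lra.
Qed.

(* [digits_val m w] is the number with base-[2^m] expansion [0.w_1 w_2 ... w_n]. *)
Definition digits_val (m : nat) (w : list Z) : R :=
  fold_right (fun x acc => (IZR x + acc) / 2 ^ m) 0 w.

(* The points of [[0,1]] having a base-[2^m] expansion with all digits in [L]. *)
Definition digit_set (m : nat) (L : list Z) (y : R) : Prop :=
  0 <= y <= 1 /\ forall n, exists w, length w = n /\ incl w L /\
    digits_val m w <= y <= digits_val m w + (/ 2 ^ m) ^ n.

Definition digits_below (m : nat) (L : list Z) : Prop :=
  forall x, In x L -> (0 <= x <= 2 ^ Z.of_nat m - 1)%Z.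

Fixpoint words (L : list Z) (n : nat) : list (list Z) :=
  match n with
  | O => [[]]
  | S n => flat_map (fun w => map (fun x => x :: w) L) (words L n)
  end.

Lemma words_complete L n w : length w = n -> incl w L -> In w (words L n).
Proof.
  revert w; induction n as [|n IH]; intros w Hl Hw.
  - destruct w; [now left | discriminate].
  - destruct w as [|x w]; [discriminate|]. apply in_flat_map. exists w. split.
    + apply IH; [simpl in Hl; lia | exact (proj2 (incl_cons_inv Hw))].
    + apply in_map_iff. exists x. split; [reflexivity | apply Hw; now left].
Qed.

Lemma words_sound L n w : In w (words L n) -> length w = n /\ incl w L.
Proof.
  revert w; induction n as [|n IH]; intros w Hw.
  - destruct Hw as [<-|[]]. split; [reflexivity | apply incl_nil_l].
  - apply in_flat_map in Hw. destruct Hw as [w' [Hw' Hx]].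
    apply in_map_iff in Hx. destruct Hx as [x [<- Hx]].
    destruct (IH w' Hw') as [H1 H2]. split; [simpl; lia | now apply incl_cons].
Qed.

Lemma length_words L n : length (words L n) = (length L ^ n)%nat.
Proof.
  induction n as [|n IH]; [reflexivity|]. simpl. rewrite <- IH. clear IH.
  induction (words L n) as [|w ws IHw]; simpl; [lia|].
  rewrite length_app, length_map, IHw. lia.
Qed.

Lemma inv_pow2_pow_pos m n : 0 < (/ 2 ^ m) ^ n.
Proof. apply pow_lt, inv_pow2_pos. Qed.

Lemma digits_val_app m w1 w2 :
  digits_val m (w1 ++ w2) = digits_val m w1 + (/ 2 ^ m) ^ length w1 * digits_val m w2.
Proof.
  induction w1 as [|x w1 IH]; [simpl; ring|].
  simpl app. simpl digits_val. simpl in IH. rewrite IH. simpl. pose proof (pow2_pos m). field. lra.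
Qed.

Lemma digits_val_repeat0 m k : digits_val m (repeat 0%Z k) = 0.
Proof. induction k as [|k IH]; simpl; [reflexivity|]. rewrite IH. lra. Qed.

Lemma digits_val_bounds m L w : digits_below m L -> incl w L ->
  0 <= digits_val m w /\ digits_val m w + (/ 2 ^ m) ^ length w <= 1.
Proof.
  intros HR. induction w as [|x w IH]; intros Hw; [simpl; lra|].
  destruct (IH (proj2 (incl_cons_inv Hw))) as [H1 H2].
  pose proof (HR x (Hw x (or_introl eq_refl))) as Hx.
  assert (Hx0 : 0 <= IZR x) by (apply IZR_le; lia).
  assert (Hx1 : IZR x <= 2 ^ m - 1) by (rewrite <- IZR_pow2, <- minus_IZR; apply IZR_le; lia).
  pose proof (pow2_pos m). simpl digits_val. simpl length. simpl pow.
  split.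
  - apply Rmult_le_pos; [lra | left; apply Rinv_0_lt_compat; lra].
  - replace ((IZR x + digits_val m w) / 2 ^ m + / 2 ^ m * (/ 2 ^ m) ^ length w)
      with ((IZR x + (digits_val m w + (/ 2 ^ m) ^ length w)) / 2 ^ m) by (field; lra).
    apply Rmult_le_reg_r with (2 ^ m); [lra|].
    unfold Rdiv. rewrite Rmult_assoc, Rinv_l by lra. lra.
Qed.

Lemma digit_set_0 m L : In 0%Z L -> digit_set m L 0.
Proof.
  intros H0. split; [lra|]. intros n. exists (repeat 0%Z n). split; [apply repeat_length|split].
  - intros z Hz. apply repeat_spec in Hz. now subst.
  - rewrite digits_val_repeat0. pose proof (inv_pow2_pow_pos m n). lra.
Qed.

Lemma digit_set_unit m L : in_unit_interval (digit_set m L).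
Proof. intros a [H _]. exact H. Qed.

Lemma digit_set_finite_cover_null m L s : (1 <= m)%nat -> 0 < s ->
  INR (length L) * Rpower (/ 2 ^ m) s < 1 -> finite_cover_null s (digit_set m L).
Proof.
  intros Hm Hs Hrho eta delta He Hd.
  set (rho := INR (length L) * Rpower (/ 2 ^ m) s) in *.
  assert (Hr0 : 0 <= rho) by (apply Rmult_le_pos; [apply pos_INR | left; apply Rpower_pos]).
  pose proof (inv_pow2_pos m). pose proof (inv_pow2_lt1 m Hm).
  destruct (pow_eventually_below rho eta) as [N1 HN1]; [lra | lra |].
  destruct (pow_eventually_below (/ 2 ^ m) delta) as [N2 HN2]; [lra | lra |].
  set (n := Nat.max N1 N2).
  specialize (HN1 n ltac:(lia)). specialize (HN2 n ltac:(lia)).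
  exists (map (fun w => (digits_val m w, digits_val m w + (/ 2 ^ m) ^ n)) (words L n)).
  split; [|split].
  - intros p Hp. apply in_map_iff in Hp. destruct Hp as [w [<- _]]. simpl.
    pose proof (inv_pow2_pow_pos m n). lra.
  - intros y [_ Hy]. destruct (Hy n) as [w [H1 [H2 H3]]].
    exists (digits_val m w, digits_val m w + (/ 2 ^ m) ^ n). split; [|exact H3].
    apply in_map_iff. exists w. split; [reflexivity | now apply words_complete].
  - rewrite map_map.
    rewrite (map_ext _ (fun _ => Rpower ((/ 2 ^ m) ^ n) s)) by (intros; simpl; f_equal; ring).
    rewrite lsum_const, length_words, pow_INR, Rpower_pow_base by lra.
    rewrite <- Rpow_mult_distr. fold rho. lra.
Qed.

Lemma finite_intervals_avoid_nbhd (l : list (R * R)) x :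
  (forall p, In p l -> ~ (fst p <= x <= snd p)) ->
  exists d, 0 < d /\ forall y, Rabs (y - x) < d -> forall p, In p l -> ~ (fst p <= y <= snd p).
Proof.
  induction l as [|p l IH]; intros H.
  - exists 1. split; [lra | intros y _ p []].
  - destruct IH as [d [Hd Hy]]; [intros p' Hp'; apply H; now right|].
    assert (Hp : ~ (fst p <= x <= snd p)) by (apply H; now left).
    assert (He : exists e, 0 < e /\ forall y, Rabs (y - x) < e -> ~ (fst p <= y <= snd p)).
    { destruct (Rlt_or_le x (fst p)).
      - exists (fst p - x). split; [lra|]. intros y Hy1. apply Rabs_def2 in Hy1. lra.
      - exists (x - snd p). split; [lra|]. intros y Hy1. apply Rabs_def2 in Hy1. lra. }
    destruct He as [e [He He2]].
    exists (Rmin d e). split; [now apply Rmin_pos|].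
    pose proof (Rmin_l d e). pose proof (Rmin_r d e).
    intros y Hyx p' [<-|Hp']; [apply He2 | apply Hy]; auto; lra.
Qed.

Lemma digit_set_closed m L : closed_set (digit_set m L).
Proof.
  intros x Hx.
  destruct (Rlt_or_le x 0) as [Hx0|Hx0].
  { exists (mkposreal (- x) ltac:(lra)). intros y Hy [[Hy0 _] _].
    unfold disc in Hy. simpl in Hy. apply Rabs_def2 in Hy. lra. }
  destruct (Rlt_or_le 1 x) as [Hx1|Hx1].
  { exists (mkposreal (x - 1) ltac:(lra)). intros y Hy [[_ Hy1] _].
    unfold disc in Hy. simpl in Hy. apply Rabs_def2 in Hy. lra. }
  assert (Hn : exists n, forall w, length w = n -> incl w L ->
            ~ (digits_val m w <= x <= digits_val m w + (/ 2 ^ m) ^ n)).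
  { apply NNPP. intros Hne. apply Hx. split; [lra|]. intros n.
    apply NNPP. intros Hnw. apply Hne. exists n. intros w H1 H2 H3. apply Hnw. eauto. }
  destruct Hn as [n Hn].
  destruct (finite_intervals_avoid_nbhd
    (map (fun w => (digits_val m w, digits_val m w + (/ 2 ^ m) ^ n)) (words L n)) x)
    as [d [Hd Hy]].
  { intros p Hp. apply in_map_iff in Hp. destruct Hp as [w [<- Hw]].
    destruct (words_sound L n w Hw). now apply Hn. }
  exists (mkposreal d Hd). intros y Hyd [_ Hy2]. unfold disc in Hyd. simpl in Hyd.
  destruct (Hy2 n) as [w [H1 [H2 H3]]].
  apply (Hy y Hyd (digits_val m w, digits_val m w + (/ 2 ^ m) ^ n)); [|exact H3].
  apply in_map_iff. exists w. split; [reflexivity | now apply words_complete].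
Qed.

(* Multiplication by [2^m] shifts the expansion; the only carry, to the value [1], happens on
   expansions ending in the digit [2^m - 1] repeated, and then [{2^m y} = 0] is in the set. *)
Lemma digit_set_invariant m L : digits_below m L -> In 0%Z L ->
  times_p_invariant (2 ^ m) (digit_set m L).
Proof.
  intros HR H0 y [Hy01 Hy]. rewrite INR_pow2. pose proof (pow2_pos m).
  split; [pose proof (frac_part_bounds (2 ^ m * y)); lra|].
  intros n. destruct (Hy (S n)) as [[|x w] [H1 [H2 H3]]]; [discriminate|].
  injection H1 as H1.
  assert (Hw : incl w L) by exact (proj2 (incl_cons_inv H2)).
  destruct (digits_val_bounds m L w HR Hw) as [B1 B2]. rewrite H1 in B2.
  assert (Hv : digits_val m w <= 2 ^ m * y - IZR x <= digits_val m w + (/ 2 ^ m) ^ n).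
  { simpl digits_val in H3. simpl pow in H3.
    replace (2 ^ m * y - IZR x) with (2 ^ m * (y - (IZR x + digits_val m w) / 2 ^ m)
      + digits_val m w) by (field; lra).
    replace ((/ 2 ^ m) ^ n) with (2 ^ m * (/ 2 ^ m * (/ 2 ^ m) ^ n)) by (field; lra).
    nra. }
  destruct (Rlt_or_le (2 ^ m * y - IZR x) 1) as [Hlt|Hge].
  - exists w. split; [exact H1 | split; [exact Hw|]].
    unfold frac_part. rewrite (Int_part_eq (2 ^ m * y) x) by lra. lra.
  - replace (2 ^ m * y) with (IZR (x + 1)) by (rewrite plus_IZR; lra).
    rewrite frac_part_IZR. exact (proj2 (digit_set_0 m L H0) n).
Qed.

Lemma digit_set_H_null m L c s : (1 <= m)%nat -> 0 <= c ->
  INR (length L) <= Rpower 2 c -> c < INR m * s -> H_null s (digit_set m L).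
Proof.
  intros Hm Hc HL Hcs.
  assert (Hs : 0 < s) by (apply (le_INR 1) in Hm; simpl in Hm; nra).
  apply H_null_of_finite_cover_null; [exact Hs|]. apply digit_set_finite_cover_null; auto.
  rewrite inv_pow2_Rpower, Rpower_mult.
  apply Rle_lt_trans with (Rpower 2 c * Rpower 2 (- INR m * s)).
  - apply Rmult_le_compat_r; [left; apply Rpower_pos | exact HL].
  - rewrite <- Rpower_plus, <- (Rpower_O 2) by lra. apply Rpower_lt; lra.
Qed.

Lemma digit_set_hdim m L c : (1 <= m)%nat -> 0 <= c -> INR (length L) <= Rpower 2 c ->
  exists d, is_hdim (digit_set m L) d /\ INR m * d <= c.
Proof.
  intros Hm Hc HL. apply (le_INR 1) in Hm as HmR. simpl in HmR.
  assert (Hnull : forall s, c / INR m < s -> H_null s (digit_set m L)).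
  { intros s Hs. apply (digit_set_H_null m L c); auto.
    apply Rmult_lt_compat_l with (r := INR m) in Hs; [|lra].
    now replace (INR m * (c / INR m)) with c in Hs by (field; lra). }
  assert (0 <= c / INR m) by (apply Rmult_le_pos; [lra | left; apply Rinv_0_lt_compat; lra]).
  destruct (hdim_exists (digit_set m L) (c / INR m + 1)) as [d Hd]; [lra | apply Hnull; lra |].
  exists d. split; [exact Hd|].
  apply (hdim_le _ _ (c / INR m) Hd) in Hnull; [|lra].
  apply Rmult_le_compat_l with (r := INR m) in Hnull; [|lra].
  now replace (INR m * (c / INR m)) with c in Hnull by (field; lra).
Qed.

Lemma Rpower_opp_antimono x y b : 0 <= b -> 0 < x <= y -> Rpower y (- b) <= Rpower x (- b).
Proof.
  intros Hb Hxy. rewrite !Rpower_Ropp. apply Rinv_le_contravar; [apply Rpower_pos|].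
  now apply Rle_Rpower_l.
Qed.

Lemma carry_range (a a' a'' : R) (z : Z) : 0 <= a <= 1 -> 0 <= a' <= 1 -> 0 <= a'' <= 1 ->
  a = a' + a'' + IZR z -> In z [(-2)%Z; (-1)%Z; 0%Z; 1%Z].
Proof.
  intros Ha Ha' Ha'' ->.
  assert (Hz : IZR (-3) < IZR z < IZR 2) by (simpl; lra).
  destruct Hz as [Hz1 Hz2]. apply lt_IZR in Hz1, Hz2. simpl. lia.
Qed.

Section SumWithDigitSet.
Variables (m : nat) (L : list Z) (s b : R).
Hypotheses (Hm : (1 <= m)%nat) (Hs : 0 <= s) (Hb : 0 <= b)
  (HL : INR (length L) <= Rpower (/ 2 ^ m) (- b)).

Let q := / 2 ^ m.
Let cst := 4 * Rpower q (- b) * Rpower 2 (s + b).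

Lemma cover_weight_bound ell n : 0 < ell -> q * ell <= q ^ n -> q ^ n <= ell ->
  4 * (INR (length L) ^ n * (Rpower 2 (s + b) * Rpower ell (s + b))) <= cst * Rpower ell s.
Proof.
  intros Hell Hqn Hn.
  assert (Hq : 0 < q) by apply inv_pow2_pos.
  assert (HLn : INR (length L) ^ n <= Rpower q (- b) * Rpower ell (- b)).
  { transitivity (Rpower q (- b) ^ n); [apply pow_incr; split; [apply pos_INR | exact HL]|].
    rewrite <- Rpower_pow_base, Rpower_mult_distr by lra.
    apply Rpower_opp_antimono; [exact Hb | split; [apply Rmult_lt_0_compat; lra | exact Hqn]]. }
  unfold cst.
  replace (Rpower ell s) with (Rpower ell (- b) * Rpower ell (s + b))
    by (rewrite <- Rpower_plus; f_equal; ring).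
  pose proof (Rpower_pos 2 (s + b)). pose proof (Rpower_pos ell (s + b)).
  replace (4 * Rpower q (- b) * Rpower 2 (s + b) * (Rpower ell (- b) * Rpower ell (s + b)))
    with (4 * ((Rpower q (- b) * Rpower ell (- b)) * (Rpower 2 (s + b) * Rpower ell (s + b))))
    by ring.
  apply Rmult_le_compat_l; [lra|]. apply Rmult_le_compat_r; [|exact HLn].
  apply Rmult_le_pos; lra.
Qed.

(* An interval of length [ell] plus the digit set (mod 1) is covered by [4 |L|^n] intervals of
   length at most [2 ell], where [q^n] is the level of the digit set comparable to [ell]. *)
Lemma interval_plus_digit_set_cover (p : R * R) delta :
  0 < snd p - fst p <= Rmin (delta / 2) 1 ->
  exists l : list (R * R),
    (forall p', In p' l -> 0 < snd p' - fst p' <= delta) /\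
    (forall a' a'' z, fst p <= a' <= snd p -> digit_set m L a'' ->
       In z [(-2)%Z; (-1)%Z; 0%Z; 1%Z] ->
       exists p', In p' l /\ fst p' <= a' + a'' + IZR z <= snd p') /\
    lsum (map (fun p' => Rpower (snd p' - fst p') (s + b)) l) <= cst * Rpower (snd p - fst p) s.
Proof.
  destruct p as [al be]. simpl. intros Hl. set (ell := be - al) in *.
  pose proof (Rmin_l (delta / 2) 1). pose proof (Rmin_r (delta / 2) 1).
  assert (Hq : 0 < q < 1) by (split; [apply inv_pow2_pos | now apply inv_pow2_lt1]).
  destruct (pow_level q ell Hq ltac:(lra)) as [n0 [Hn1 Hn2]].
  set (n := S n0) in Hn2.
  assert (Hqn : q * ell <= q ^ n) by (unfold n; simpl; apply Rmult_le_compat_l; lra).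
  assert (Hqn0 : 0 < q ^ n) by (apply pow_lt; lra).
  exists (flat_map (fun z => map (fun w =>
    (al + digits_val m w + IZR z, be + digits_val m w + q ^ n + IZR z)) (words L n))
    [(-2)%Z; (-1)%Z; 0%Z; 1%Z]).
  split; [|split].
  - intros p' Hp'. apply in_flat_map in Hp'. destruct Hp' as [z [_ Hp']].
    apply in_map_iff in Hp'. destruct Hp' as [w [<- _]]. cbn [fst snd].
    unfold ell in *. lra.
  - intros a' a'' z Ha' [_ Ha''] Hz. destruct (Ha'' n) as [w [H1 [H2 H3]]].
    exists (al + digits_val m w + IZR z, be + digits_val m w + q ^ n + IZR z). split.
    + apply in_flat_map. exists z. split; [exact Hz|].
      apply in_map_iff. exists w. split; [reflexivity | now apply words_complete].
    + cbn [fst snd]. unfold q in *. lra.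
  - rewrite lsum_flat_map.
    eapply Rle_trans; [|apply (cover_weight_bound ell n); lra].
    replace 4 with (INR (length [(-2)%Z; (-1)%Z; 0%Z; 1%Z])) by (simpl; lra).
    rewrite <- pow_INR, <- length_words, <- lsum_const.
    apply lsum_le. intros z _. rewrite map_map, <- lsum_const.
    apply lsum_le. intros w _. cbn [fst snd]. rewrite Rpower_mult_distr by lra.
    replace (be + digits_val m w + q ^ n + IZR z - (al + digits_val m w + IZR z))
      with (ell + q ^ n) by (unfold ell; ring).
    apply Rle_Rpower_l; lra.
Qed.

Lemma intervals_plus_digit_set_cover (l0 : list (R * R)) delta :
  (forall p, In p l0 -> 0 < snd p - fst p <= Rmin (delta / 2) 1) ->
  exists l : list (R * R),
    (forall p', In p' l -> 0 < snd p' - fst p' <= delta) /\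
    (forall a' a'' z, (exists p, In p l0 /\ fst p <= a' <= snd p) -> digit_set m L a'' ->
       In z [(-2)%Z; (-1)%Z; 0%Z; 1%Z] ->
       exists p', In p' l /\ fst p' <= a' + a'' + IZR z <= snd p') /\
    lsum (map (fun p' => Rpower (snd p' - fst p') (s + b)) l) <=
      cst * lsum (map (fun p => Rpower (snd p - fst p) s) l0).
Proof.
  induction l0 as [|p l0 IH]; intros Hp.
  - exists []. split; [intros ? [] | split; [intros a' a'' z [p [[] _]] | simpl; lra]].
  - destruct IH as [lr [Hr1 [Hr2 Hr3]]]; [intros p' Hp'; apply Hp; now right|].
    destruct (interval_plus_digit_set_cover p delta (Hp p (or_introl eq_refl)))
      as [lp [Hp1 [Hp2 Hp3]]].
    exists (lp ++ lr). split; [|split].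
    + intros p' Hp'. apply in_app_or in Hp'. destruct Hp'; auto.
    + intros a' a'' z [p' [[<-|Hin] Ha']] Hk Hz.
      * destruct (Hp2 a' a'' z Ha' Hk Hz) as [p'' [H1 H2]].
        exists p''. split; [apply in_or_app; auto | exact H2].
      * destruct (Hr2 a' a'' z (ex_intro _ p' (conj Hin Ha')) Hk Hz) as [p'' [H1 H2]].
        exists p''. split; [apply in_or_app; auto | exact H2].
    + rewrite map_app, lsum_app. simpl. lra.
Qed.

Lemma finite_cover_null_sum_digit_set (A A' : R -> Prop) :
  finite_cover_null s A' -> in_unit_interval A -> in_unit_interval A' ->
  subset_sum_mod1 A A' (digit_set m L) -> finite_cover_null (s + b) A.
Proof.
  intros HF HA HA' Hdec eta delta He Hd.
  assert (Hc : 0 < cst).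
  { unfold cst. pose proof (Rpower_pos q (- b)). pose proof (Rpower_pos 2 (s + b)).
    apply Rmult_lt_0_compat; lra. }
  destruct (HF (eta / cst) (Rmin (delta / 2) 1)) as [l' [Hl1 [Hl2 Hl3]]];
    [apply Rdiv_lt_0_compat; lra | apply Rmin_pos; lra |].
  destruct (intervals_plus_digit_set_cover l' delta Hl1) as [l [H1 [H2 H3]]].
  exists l. split; [exact H1 | split].
  - intros a Ha. destruct (Hdec a Ha) as [a' [a'' [z [Ha' [Ha'' Hz]]]]].
    pose proof (carry_range a a' a'' z (HA a Ha) (HA' a' Ha') (proj1 Ha'') Hz).
    subst a. apply H2; auto.
  - eapply Rle_trans; [exact H3|].
    replace eta with (cst * (eta / cst)) by (field; lra).
    apply Rmult_le_compat_l; lra.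
Qed.

End SumWithDigitSet.

Lemma hdim_subset_sum_digit_set_le (A A' : R -> Prop) m L c s d' :
  (1 <= m)%nat -> 0 <= c -> INR (length L) <= Rpower 2 c ->
  compact A' -> in_unit_interval A -> in_unit_interval A' ->
  subset_sum_mod1 A A' (digit_set m L) -> is_hdim A s -> is_hdim A' d' ->
  INR m * s <= INR m * d' + c.
Proof.
  intros Hm Hc HL HA'c HA HA' Hsub Hs Hd'.
  apply (le_INR 1) in Hm as HmR. simpl in HmR.
  pose proof (hdim_nonneg _ _ Hd').
  assert (Hcm : 0 <= c / INR m) by (apply Rmult_le_pos; [lra | left; apply Rinv_0_lt_compat; lra]).
  cut (s <= d' + c / INR m).
  { intros Hle. apply Rmult_le_compat_l with (r := INR m) in Hle; [|lra].
    now replace (INR m * (d' + c / INR m)) with (INR m * d' + c) in Hle by (field; lra). }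
  apply (hdim_le A s); [exact Hs | lra|]. intros t Ht.
  set (de := (t - d' - c / INR m) / 2).
  replace t with ((d' + de) + (c / INR m + de)) by (unfold de; field; lra).
  apply H_null_of_finite_cover_null; [unfold de; lra|].
  assert (Hde : 0 < de) by (unfold de; lra).
  apply (finite_cover_null_sum_digit_set m L _ _ Hm) with (A' := A'); auto; try lra.
  - rewrite inv_pow2_Rpower, Rpower_mult. eapply Rle_trans; [exact HL|].
    apply Rle_Rpower; [lra|].
    replace (- INR m * - (c / INR m + de)) with (c + INR m * de) by (field; lra). nra.
  - apply finite_cover_null_of_compact; [exact HA'c | lra|].
    apply (H_null_gt_hdim A' d'); [exact Hd' | lra].
Qed.

Lemma interval_two_dyadic (al be t : R) : 0 < t -> 0 < be - al <= / 4 ->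
  exists n, (1 <= n)%nat /\ Rpower (/ 2 ^ n) t <= Rpower 2 t * Rpower (be - al) t /\
    forall y, al <= y <= be ->
      Int_part (2 ^ n * y) = Int_part (2 ^ n * al) \/
      Int_part (2 ^ n * y) = (Int_part (2 ^ n * al) + 1)%Z.
Proof.
  intros Ht Hl. set (ell := be - al) in *.
  destruct (pow_level (/ 2) ell ltac:(lra) ltac:(lra)) as [n [Hn1 Hn2]].
  rewrite pow_inv in Hn1, Hn2. pose proof (pow2_pos n).
  exists n. split; [|split].
  - destruct n; [simpl in Hn2; lra | lia].
  - rewrite Rpower_mult_distr by lra. apply Rle_Rpower_l; [lra|].
    split; [apply inv_pow2_pos|]. simpl in Hn2.
    replace (/ 2 ^ n) with (2 * / (2 * 2 ^ n)) by (field; lra). lra.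
  - intros y Hy.
    assert (H2l : 2 ^ n * ell <= 1).
    { apply Rmult_le_compat_l with (r := 2 ^ n) in Hn1; [|lra].
      now rewrite Rinv_r in Hn1 by lra. }
    assert (Hy1 : 2 ^ n * al <= 2 ^ n * y <= 2 ^ n * al + 1) by (unfold ell in *; split; nra).
    pose proof (Int_part_bounds (2 ^ n * al)). pose proof (Int_part_bounds (2 ^ n * y)).
    assert (Ha : IZR (Int_part (2 ^ n * al) - 1) < IZR (Int_part (2 ^ n * y)))
      by (rewrite minus_IZR; simpl; lra).
    assert (Hb : IZR (Int_part (2 ^ n * y)) < IZR (Int_part (2 ^ n * al) + 2))
      by (rewrite plus_IZR; simpl; lra).
    apply lt_IZR in Ha, Hb. lia.
Qed.

Definition dyadic_pair_cover (D : list (nat * Z)) (A : R -> Prop) : Prop :=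
  forall y, A y -> exists d, In d D /\
    (Int_part (2 ^ fst d * y) = snd d \/ Int_part (2 ^ fst d * y) = (snd d + 1)%Z).

Lemma dyadic_pair_cover_of_intervals t (l : list (R * R)) : 0 < t ->
  (forall p, In p l -> 0 < snd p - fst p <= / 4) ->
  exists D : list (nat * Z),
    (forall d, In d D -> (1 <= fst d)%nat) /\
    dyadic_pair_cover D (fun y => exists p, In p l /\ fst p <= y <= snd p) /\
    lsum (map (fun d => Rpower (/ 2 ^ fst d) t) D) <=
      Rpower 2 t * lsum (map (fun p => Rpower (snd p - fst p) t) l).
Proof.
  intros Ht. induction l as [|[al be] l IH]; intros Hl.
  - exists []. split; [intros ? [] | split; [intros y [p [[] _]] | simpl; lra]].
  - destruct IH as [D [HD1 [HD2 HD3]]]; [intros p Hp; apply Hl; now right|].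
    destruct (interval_two_dyadic al be t Ht (Hl (al, be) (or_introl eq_refl)))
      as [n [Hn [Hw Hcov]]].
    exists ((n, Int_part (2 ^ n * al)) :: D). split; [|split].
    + intros d [<-|Hd]; auto.
    + intros y [p [[<-|Hin] Hy]].
      * exists (n, Int_part (2 ^ n * al)). split; [now left | exact (Hcov y Hy)].
      * destruct (HD2 y (ex_intro _ p (conj Hin Hy))) as [d [Hd1 Hd2]].
        exists d. split; [now right | exact Hd2].
    + simpl. lra.
Qed.

Definition dyadic_count_le (A : R -> Prop) (j : nat) (B : R) : Prop :=
  exists l : list Z, INR (length l) <= B /\ forall y, A y -> In (Int_part (2 ^ j * y)) l.

Lemma dyadic_count_le_trivial A j : in_unit_interval A -> dyadic_count_le A j (2 ^ j + 1).
Proof.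
  intros HAu. exists (map Z.of_nat (seq 0 (S (2 ^ j)))). split.
  - rewrite length_map, length_seq, S_INR, INR_pow2. lra.
  - intros y Hy. apply in_map_iff. exists (Z.to_nat (Int_part (2 ^ j * y))).
    pose proof (Int_part_pow2_range y j (HAu y Hy)).
    assert (Z.to_nat (2 ^ Z.of_nat j) = 2 ^ j)%nat
      by (rewrite Z2Nat.inj_pow by lia; simpl; now rewrite Nat2Z.id).
    split; [lia | apply in_seq; lia].
Qed.

(* Window identity: a level-[j] digit block is a level-[k] block followed by a level-[(j-k)] block
   of [{2^k y}], which lies again in [A]. *)
Lemma dyadic_count_le_split A (D : list (nat * Z)) j (B : nat -> R) :
  in_unit_interval A -> times_p_invariant 2 A -> dyadic_pair_cover D A ->
  (forall d, In d D -> (fst d <= j)%nat /\ dyadic_count_le A (j - fst d) (B (fst d))) ->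
  dyadic_count_le A j (lsum (map (fun d => 2 * B (fst d)) D)).
Proof.
  intros HAu HAi HD HB.
  assert (Hgen : forall D0, (forall d, In d D0 -> In d D) -> exists l : list Z,
    INR (length l) <= lsum (map (fun d => 2 * B (fst d)) D0) /\
    forall y, A y -> (exists d, In d D0 /\ (Int_part (2 ^ fst d * y) = snd d \/
                     Int_part (2 ^ fst d * y) = (snd d + 1)%Z)) ->
      In (Int_part (2 ^ j * y)) l).
  { induction D0 as [|[k c] D0 IH]; intros HD0.
    - exists []. split; [simpl; lra | intros y _ [d [[] _]]].
    - destruct IH as [lr [Hr1 Hr2]]; [intros d Hd; apply HD0; now right|].
      destruct (HB (k, c) (HD0 _ (or_introl eq_refl))) as [Hkj [l1 [Hl1 Hcov1]]].
      simpl in Hkj, Hl1, Hcov1.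
      set (P := (2 ^ Z.of_nat (j - k))%Z).
      exists (map (fun x => P * c + x)%Z l1 ++ map (fun x => P * (c + 1) + x)%Z l1 ++ lr).
      split.
      + rewrite !length_app, !length_map, !plus_INR. simpl. lra.
      + intros y Hy [d [[<-|Hd] Hc]]; simpl in Hc.
        * replace (Int_part (2 ^ j * y)) with
            (P * Int_part (2 ^ k * y) + Int_part (2 ^ (j - k) * frac_part (2 ^ k * y)))%Z
            by (unfold P; rewrite <- Int_part_pow2_add; do 3 f_equal; lia).
          assert (Hin := Hcov1 _ (times2_invariant_pow2 A HAu HAi k y Hy)).
          destruct Hc as [-> | ->]; apply in_or_app; [left | right; apply in_or_app; left];
            apply in_map_iff; eauto.
        * apply in_or_app. right. apply in_or_app. right. apply Hr2; eauto. }
  destruct (Hgen D (fun d H => H)) as [l [Hl Hcov]]. exists l. split; [exact Hl|].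
  intros y Hy. apply Hcov; auto.
Qed.

Lemma dyadic_count_le_mono A j B B' : B <= B' -> dyadic_count_le A j B -> dyadic_count_le A j B'.
Proof. intros HB [l [Hl Hcov]]. exists l. split; [lra | exact Hcov]. Qed.

Lemma Rpower2_INR_sub n k t : (k <= n)%nat ->
  Rpower 2 (INR (n - k) * t) = Rpower 2 (INR n * t) * Rpower (/ 2 ^ k) t.
Proof.
  intros Hk. rewrite minus_INR, inv_pow2_Rpower, Rpower_mult, <- Rpower_plus by exact Hk.
  f_equal. ring.
Qed.

Lemma light_dyadic_pair_cover A t : compact A -> 0 < t -> H_null t A ->
  exists D : list (nat * Z), (forall d, In d D -> (1 <= fst d)%nat) /\ dyadic_pair_cover D A /\
    lsum (map (fun d => Rpower (/ 2 ^ fst d) t) D) <= / 4.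
Proof.
  intros HC Ht HH. pose proof (Rpower_pos 2 t).
  destruct (finite_cover_null_of_compact t A HC (Rlt_le _ _ Ht) HH (/ (4 * Rpower 2 t)) (/ 4))
    as [l0 [Hl1 [Hl2 Hl3]]]; [apply Rinv_0_lt_compat; lra | lra |].
  destruct (dyadic_pair_cover_of_intervals t l0 Ht Hl1) as [D [HD1 [HD2 HD3]]].
  exists D. split; [exact HD1 | split; [intros y Hy; apply HD2, Hl2, Hy|]].
  eapply Rle_trans; [exact HD3|].
  replace (/ 4) with (Rpower 2 t * / (4 * Rpower 2 t)) by (field; lra).
  apply Rmult_le_compat_l; lra.
Qed.

(* With dyadic data of weight at most [1/4] and maximal level [N0], splitting a level-[j] block
   at every level of [D] shows by strong induction that [2^(N0+1) 2^(j t)] bounds the count. *)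
Lemma dyadic_count_growth A t : closed_set A -> in_unit_interval A -> times_p_invariant 2 A ->
  0 < t -> H_null t A -> exists c, 0 <= c /\ forall n, dyadic_count_le A n (Rpower 2 (c + INR n * t)).
Proof.
  intros HAc HAu HAi Ht HH.
  assert (HC : compact A) by (apply compact_P5; [exact HAc | exists 0, 1; exact HAu]).
  destruct (light_dyadic_pair_cover A t HC Ht HH) as [D [HD1 [HDA HW]]].
  set (N0 := fold_right Nat.max 0%nat (map (@fst nat Z) D)).
  assert (HN0 : forall d, In d D -> (fst d <= N0)%nat)
    by (intros d Hd; apply fold_max_ge, in_map, Hd).
  set (C := 2 ^ S N0).
  assert (Hstrong : forall n j, (j <= n)%nat -> dyadic_count_le A j (C * Rpower 2 (INR j * t))).
  { induction n as [|n IH]; intros j Hj; destruct (le_lt_dec j N0) as [HjN|HjN].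
    2: lia.
    1,2: apply (dyadic_count_le_mono A j (2 ^ j + 1)); [|now apply dyadic_count_le_trivial];
      pose proof (Rpower_ge1 (INR j * t) ltac:(apply Rmult_le_pos; [apply pos_INR | lra]));
      pose proof (Rle_pow 2 j N0 ltac:(lra) HjN); pose proof (pow2_ge1 N0);
      unfold C; simpl; nra.
    apply (dyadic_count_le_mono A j
      (lsum (map (fun d => 2 * (C * Rpower 2 (INR (j - fst d) * t))) D))).
    - rewrite (map_ext_in _ (fun d => 2 * C * Rpower 2 (INR j * t) * Rpower (/ 2 ^ fst d) t))
        by (intros d Hd; rewrite Rpower2_INR_sub by (pose proof (HN0 d Hd); lia); ring).
      rewrite lsum_scal.
      assert (0 < C * Rpower 2 (INR j * t))
        by (apply Rmult_lt_0_compat; [apply pow2_pos | apply Rpower_pos]).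
      set (X := C * Rpower 2 (INR j * t)) in *.
      replace (2 * C * Rpower 2 (INR j * t)) with (2 * X) by (unfold X; ring).
      nra.
    - apply (dyadic_count_le_split A D j (fun k => C * Rpower 2 (INR (j - k) * t))); auto.
      intros d Hd. pose proof (HD1 d Hd). pose proof (HN0 d Hd).
      split; [lia | apply IH; lia]. }
  exists (INR (S N0)). split; [apply pos_INR|]. intros n.
  rewrite Rpower_plus, Rpower_pow by lra. apply (Hstrong n n). lia.
Qed.

Lemma digit_set_limit m L (W : nat -> list Z) : digits_below m L ->
  (forall n, length (W n) = n /\ incl (W n) L) ->
  (forall n j, exists u, W (n + j)%nat = W n ++ u /\ incl u L) ->
  exists a, digit_set m L a /\
    forall n, digits_val m (W n) <= a <= digits_val m (W n) + (/ 2 ^ m) ^ n.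
Proof.
  intros HR HW Happ.
  assert (Hb : forall n, 0 <= digits_val m (W n) /\ digits_val m (W n) + (/ 2 ^ m) ^ n <= 1).
  { intros n. destruct (HW n) as [H1 H2]. pose proof (digits_val_bounds m L _ HR H2) as Hv.
    now rewrite H1 in Hv. }
  assert (Hext : forall n j, digits_val m (W n) <= digits_val m (W (n + j)%nat)
                             <= digits_val m (W n) + (/ 2 ^ m) ^ n).
  { intros n j. destruct (Happ n j) as [u [-> Hu]].
    rewrite digits_val_app. destruct (digits_val_bounds m L u HR Hu).
    pose proof (inv_pow2_pow_pos m (length u)). pose proof (inv_pow2_pow_pos m n).
    destruct (HW n) as [-> _]. nra. }
  destruct (completeness (fun x => exists n, x = digits_val m (W n))) as [a [Hub Hlub]].
  - exists 1. intros x [n ->]. destruct (Hb n). pose proof (inv_pow2_pow_pos m n). lra.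
  - exists (digits_val m (W 0%nat)). now exists 0%nat.
  - assert (Ha : forall n, digits_val m (W n) <= a <= digits_val m (W n) + (/ 2 ^ m) ^ n).
    { intros n. split; [apply Hub; now exists n|].
      apply Hlub. intros x [n' ->].
      destruct (Nat.le_gt_cases n' n) as [h|h].
      + replace n with (n' + (n - n'))%nat by lia.
        pose proof (Hext n' (n - n')%nat). pose proof (inv_pow2_pow_pos m (n' + (n - n'))). lra.
      + replace n' with (n + (n' - n))%nat by lia. apply Hext. }
    exists a. split; [|exact Ha]. split.
    + pose proof (Ha 0%nat). destruct (Hb 0%nat). split; [lra|].
      apply Hlub. intros x [n ->]. destruct (Hb n). pose proof (inv_pow2_pow_pos m n). lra.
    + intros n. exists (W n). destruct (HW n). auto.
Qed.

Fixpoint itinerary (f : R -> Z) (T : R -> R) (n : nat) (y : R) : list Z :=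
  match n with O => [] | S n => f y :: itinerary f T n (T y) end.

Lemma length_itinerary f T n y : length (itinerary f T n y) = n.
Proof. revert y; induction n; intros y; simpl; auto. Qed.

Lemma itinerary_add f T n j y :
  itinerary f T (n + j) y = itinerary f T n y ++ itinerary f T j (Nat.iter n T y).
Proof.
  revert y; induction n as [|n IH]; intros y; [reflexivity|].
  simpl. rewrite IH. do 3 f_equal. clear. revert y. induction n as [|n IH]; intros y; simpl; auto.
  now rewrite IH.
Qed.

Lemma eq0_of_le_geometric x q : 0 < q < 1 -> (forall n, Rabs x <= 3 * q ^ n) -> x = 0.
Proof.
  intros Hq H. apply NNPP. intros Hx. apply Rabs_pos_lt in Hx.
  destruct (pow_eventually_below q (Rabs x / 3)) as [N HN]; [lra | lra |].
  specialize (HN N (le_n N)). specialize (H N). lra.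
Qed.

Definition digit_range (n : nat) (c : Z) : bool :=
  andb (Z.leb 0 c) (Z.leb c (2 ^ Z.of_nat n - 1)%Z).

Lemma dyadic_digits_of_count (A : R -> Prop) n (l : list Z) :
  in_unit_interval A -> (forall y, A y -> In (Int_part (2 ^ n * y)) l) ->
  digits_below n (filter (digit_range n) l) /\
  (forall y, A y -> y < 1 -> In (Int_part (2 ^ n * y)) (filter (digit_range n) l)).
Proof.
  intros HAu Hl. split.
  - intros x Hx. apply filter_In in Hx. destruct Hx as [_ Hx].
    apply andb_prop in Hx. destruct Hx as [H1 H2]. apply Z.leb_le in H1, H2. lia.
  - intros y Hy Hy1. apply filter_In. split; [now apply Hl|].
    pose proof (Int_part_pow2_frac_range y n) as Hr. pose proof (HAu y Hy).
    rewrite frac_part_id in Hr by lra.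
    apply andb_true_intro. split; apply Z.leb_le; lia.
Qed.

Section DigitSplitting.
Variables (A : R -> Prop) (k r : nat) (lk lr : list Z).
Hypotheses (HAu : in_unit_interval A) (HAi : times_p_invariant 2 A) (Hm : (1 <= k + r)%nat)
  (Hlk_range : digits_below k lk) (Hlk : forall y, A y -> y < 1 -> In (Int_part (2 ^ k * y)) lk)
  (Hlr_range : digits_below r lr) (Hlr : forall y, A y -> y < 1 -> In (Int_part (2 ^ r * y)) lr).

(* A base-[2^(k+r)] digit is split into its top [k] bits (kept in place) and its bottom [r] bits. *)
Definition top_digits : list Z := 0%Z :: map (Z.mul (2 ^ Z.of_nat r)) lk.
Definition bottom_digits : list Z := 0%Z :: lr.

Let m := (k + r)%nat.
Let T y := frac_part (2 ^ m * y).
Let digit y := Int_part (2 ^ m * y).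
Let top y := (2 ^ Z.of_nat r * Int_part (2 ^ k * y))%Z.
Let bottom y := Int_part (2 ^ r * frac_part (2 ^ k * y)).

Lemma top_digits_below : digits_below m top_digits.
Proof.
  clear -Hlk_range.
  pose proof (Z.pow_pos_nonneg 2 (Z.of_nat r)). pose proof (Z.pow_pos_nonneg 2 (Z.of_nat k)).
  unfold m. intros x Hx. rewrite Nat2Z.inj_add, Z.pow_add_r by lia.
  destruct Hx as [<-|Hx]; [nia|].
  apply in_map_iff in Hx. destruct Hx as [c [<- Hc]]. pose proof (Hlk_range c Hc). nia.
Qed.

Lemma bottom_digits_below : digits_below m bottom_digits.
Proof.
  clear -Hlr_range.
  pose proof (Z.pow_pos_nonneg 2 (Z.of_nat r)). pose proof (Z.pow_pos_nonneg 2 (Z.of_nat k)).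
  unfold m. intros x Hx. rewrite Nat2Z.inj_add, Z.pow_add_r by lia.
  destruct Hx as [<-|Hx]; [nia|]. pose proof (Hlr_range x Hx). nia.
Qed.

Lemma iter_T_invariant n y : A y -> y < 1 -> A (Nat.iter n T y) /\ Nat.iter n T y < 1.
Proof.
  induction n as [|n IH]; intros Hy Hy1; [auto|]. simpl. destruct (IH Hy Hy1) as [H1 _].
  split; [apply times2_invariant_pow2; auto | apply frac_part_bounds].
Qed.

Lemma itinerary_digits n y : A y -> y < 1 ->
  incl (itinerary top T n y) top_digits /\ incl (itinerary bottom T n y) bottom_digits.
Proof.
  revert y; induction n as [|n IH]; intros y Hy Hy1; [split; apply incl_nil_l|].
  destruct (iter_T_invariant 1 y Hy Hy1) as [HT1 HT2].
  destruct (IH (T y) HT1 HT2) as [I1 I2]. simpl. split; apply incl_cons; auto; right.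
  - apply (in_map (Z.mul (2 ^ Z.of_nat r))). now apply Hlk.
  - apply (Hlr (frac_part (2 ^ k * y))); [apply times2_invariant_pow2; auto | apply frac_part_bounds].
Qed.

Lemma digits_val_itinerary_split n y :
  digits_val m (itinerary digit T n y) =
  digits_val m (itinerary top T n y) + digits_val m (itinerary bottom T n y).
Proof.
  revert y; induction n as [|n IH]; intros y; simpl; [lra|]. rewrite IH.
  unfold digit, top, bottom, m. rewrite Int_part_pow2_add, plus_IZR.
  pose proof (pow2_pos (k + r)). field. lra.
Qed.

Lemma digits_val_itinerary_approx n y : 0 <= y < 1 ->
  digits_val m (itinerary digit T n y) <= y <= digits_val m (itinerary digit T n y) + (/ 2 ^ m) ^ n.
Proof.
  revert y; induction n as [|n IH]; intros y Hy; simpl; [lra|].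
  specialize (IH (T y) (frac_part_bounds _)).
  pose proof (pow2_pos m).
  assert (E : 2 ^ m * y = IZR (digit y) + T y) by (unfold digit, T, frac_part; ring).
  set (v := digits_val m (itinerary digit T n (T y))) in *.
  split; apply Rmult_le_reg_l with (2 ^ m); try lra.
  - replace (2 ^ m * ((IZR (digit y) + v) / 2 ^ m)) with (IZR (digit y) + v) by (field; lra).
    lra.
  - replace (2 ^ m * ((IZR (digit y) + v) / 2 ^ m + / 2 ^ m * (/ 2 ^ m) ^ n))
      with (IZR (digit y) + v + (/ 2 ^ m) ^ n) by (field; lra).
    lra.
Qed.

Lemma digit_splitting a : A a -> a < 1 ->
  exists a' a'', digit_set m top_digits a' /\ digit_set m bottom_digits a'' /\ a = a' + a''.
Proof.
  intros Ha Ha1. pose proof (HAu a Ha).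
  destruct (digit_set_limit m top_digits (fun n => itinerary top T n a) top_digits_below)
    as [a' [Ka' Ha']].
  { intros n. split; [apply length_itinerary | now apply (itinerary_digits n a)]. }
  { intros n j. exists (itinerary top T j (Nat.iter n T a)). split; [apply itinerary_add|].
    destruct (iter_T_invariant n a Ha Ha1). now apply (itinerary_digits j). }
  destruct (digit_set_limit m bottom_digits (fun n => itinerary bottom T n a) bottom_digits_below)
    as [a'' [Ka'' Ha'']].
  { intros n. split; [apply length_itinerary | now apply (itinerary_digits n a)]. }
  { intros n j. exists (itinerary bottom T j (Nat.iter n T a)). split; [apply itinerary_add|].
    destruct (iter_T_invariant n a Ha Ha1). now apply (itinerary_digits j). }
  exists a', a''. split; [exact Ka' | split; [exact Ka''|]].
  assert (Hq : 0 < / 2 ^ m < 1) by (split; [apply inv_pow2_pos | now apply inv_pow2_lt1]).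
  enough (a - a' - a'' = 0) by lra.
  apply (eq0_of_le_geometric _ (/ 2 ^ m) Hq). intros n.
  pose proof (digits_val_itinerary_approx n a ltac:(lra)) as Hn.
  rewrite digits_val_itinerary_split in Hn.
  specialize (Ha' n). specialize (Ha'' n). simpl in Ha', Ha''.
  pose proof (inv_pow2_pow_pos m n). apply Rabs_le. lra.
Qed.

End DigitSplitting.

Lemma subset_sum_mod1_digit_splitting A k r lk lr :
  in_unit_interval A -> times_p_invariant 2 A -> (1 <= k + r)%nat ->
  digits_below k lk -> (forall y, A y -> y < 1 -> In (Int_part (2 ^ k * y)) lk) ->
  digits_below r lr -> (forall y, A y -> y < 1 -> In (Int_part (2 ^ r * y)) lr) ->
  subset_sum_mod1 A (digit_set (k + r) (top_digits r lk)) (digit_set (k + r) (bottom_digits lr)).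
Proof.
  intros HAu HAi Hm Hlk_range Hlk Hlr_range Hlr a Ha.
  destruct (Rlt_or_le a 1) as [Ha1|Ha1].
  - destruct (digit_splitting A k r lk lr HAu HAi Hm Hlk_range Hlk Hlr_range Hlr a Ha Ha1)
      as [a' [a'' [H1 [H2 ->]]]].
    exists a', a'', 0%Z. split; [exact H1 | split; [exact H2 | simpl; ring]].
  - exists 0, 0, 1%Z. pose proof (HAu a Ha).
    split; [apply digit_set_0; now left | split; [apply digit_set_0; now left | simpl; lra]].
Qed.

Lemma length_top_digits r lk : length (top_digits r lk) = S (length lk).
Proof. unfold top_digits. simpl. now rewrite length_map. Qed.

Lemma length_bottom_digits lr : length (bottom_digits lr) = S (length lr).
Proof. reflexivity. Qed.

Lemma dyadic_digit_lists A t : closed_set A -> in_unit_interval A -> times_p_invariant 2 A ->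
  0 < t -> H_null t A ->
  exists c, 0 <= c /\ forall n, exists l : list Z,
    digits_below n l /\ (forall y, A y -> y < 1 -> In (Int_part (2 ^ n * y)) l) /\
    INR (S (length l)) <= Rpower 2 (c + INR n * t).
Proof.
  intros HAc HAu HAi Ht HH.
  destruct (dyadic_count_growth A t HAc HAu HAi Ht HH) as [c [Hc Hcount]].
  exists (c + 1). split; [lra|]. intros n.
  destruct (Hcount n) as [l [Hl Hcov]].
  destruct (dyadic_digits_of_count A n l HAu Hcov) as [Hrange Hcov'].
  exists (filter (digit_range n) l). split; [exact Hrange | split; [exact Hcov'|]].
  pose proof (le_INR _ _ (filter_length_le (digit_range n) l)) as Hf.
  pose proof (Rpower_ge1 (c + INR n * t) ltac:(pose proof (pos_INR n); nra)).
  replace (c + 1 + INR n * t) with (1 + (c + INR n * t)) by ring.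
  rewrite S_INR, Rpower_plus, Rpower_1 by lra. lra.
Qed.

Lemma exists_scale_split s s' X : 0 < s -> 0 <= s' < s ->
  exists k r : nat, (1 <= k + r)%nat /\ X < INR (k + r) /\
    INR k * s <= INR (k + r) * s' < INR k * s + s.
Proof.
  intros Hs Hs'.
  set (m := S (Z.to_nat (up (Rabs X)))).
  assert (HmX : X < INR m).
  { unfold m. rewrite S_INR, INR_IZR_INZ. destruct (archimed (Rabs X)).
    pose proof (Rle_abs X). pose proof (Rabs_pos X).
    rewrite Z2Nat.id; [lra | apply le_IZR; simpl; lra]. }
  assert (Hq : 0 <= INR m * s' / s) by (apply Rmult_le_pos; [pose proof (pos_INR m); nra |
    left; apply Rinv_0_lt_compat; lra]).
  set (k := Z.to_nat (Int_part (INR m * s' / s))).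
  assert (Hkr : INR k <= INR m * s' / s < INR k + 1).
  { pose proof (Int_part_bounds (INR m * s' / s)).
    assert (Hnn : (0 <= Int_part (INR m * s' / s))%Z).
    { assert (H0 : IZR (-1) < IZR (Int_part (INR m * s' / s))) by lra. apply lt_IZR in H0. lia. }
    unfold k. rewrite INR_IZR_INZ, Z2Nat.id by exact Hnn. lra. }
  assert (Hkm : (k < m)%nat).
  { apply INR_lt. enough (INR m * s' / s < INR m) by lra.
    apply Rmult_lt_reg_r with s; [lra|]. unfold Rdiv.
    rewrite Rmult_assoc, Rinv_l, Rmult_1_r by lra. pose proof (pos_INR m). unfold m.
    rewrite S_INR. pose proof (pos_INR (Z.to_nat (up (Rabs X)))). nra. }
  exists k, (m - k)%nat. replace (k + (m - k))%nat with m by lia.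
  split; [unfold m; lia | split; [exact HmX|]].
  destruct Hkr as [Hk1 Hk2].
  apply Rmult_le_compat_r with (r := s) in Hk1; [|lra].
  apply Rmult_lt_compat_r with (r := s) in Hk2; [|lra].
  replace (INR m * s' / s * s) with (INR m * s') in Hk1, Hk2 by (field; lra). lra.
Qed.

Lemma dimension_bookkeeping (m k r s s' eps c d1 d2 : R) :
  m = k + r -> 0 <= k -> 0 <= r -> 0 < s <= 1 -> 0 < eps -> 0 <= c ->
  k * s <= m * s' < k * s + s -> 4 * (2 * c + 1) < m * eps ->
  m * d1 <= c + k * (s + eps / 4) -> m * d2 <= c + r * (s + eps / 4) ->
  m * s <= m * d1 + (c + r * (s + eps / 4)) ->
  Rabs (d1 - s') <= eps /\ s >= d1 + d2 - eps.
Proof.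
  intros -> Hk Hr Hs He Hc Hks Hm H1 H2 H3.
  assert (k * eps <= (k + r) * eps) by nra. assert (r * eps <= (k + r) * eps) by nra.
  assert (0 < k + r) by nra.
  split; [apply Rabs_le; split|apply Rle_ge]; apply Rmult_le_reg_l with (k + r); nra.
Qed.

Lemma digit_set_compact m L : compact (digit_set m L).
Proof.
  apply compact_P5; [apply digit_set_closed | exists 0, 1; apply digit_set_unit].
Qed.

Lemma digit_set_splitting A t : closed_set A -> in_unit_interval A -> times_p_invariant 2 A ->
  0 < t -> H_null t A ->
  exists c, 0 <= c /\ forall k r, (1 <= k + r)%nat -> exists L1 L2 : list Z,
    digits_below (k + r) L1 /\ In 0%Z L1 /\ INR (length L1) <= Rpower 2 (c + INR k * t) /\
    digits_below (k + r) L2 /\ In 0%Z L2 /\ INR (length L2) <= Rpower 2 (c + INR r * t) /\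
    subset_sum_mod1 A (digit_set (k + r) L1) (digit_set (k + r) L2).
Proof.
  intros HAc HAu HAi Ht HH.
  destruct (dyadic_digit_lists A t HAc HAu HAi Ht HH) as [c [Hc Hlists]].
  exists c. split; [exact Hc|]. intros k r Hm.
  destruct (Hlists k) as [lk [Hlk_range [Hlk Hlk_len]]].
  destruct (Hlists r) as [lr [Hlr_range [Hlr Hlr_len]]].
  exists (top_digits r lk), (bottom_digits lr).
  rewrite length_top_digits, length_bottom_digits.
  split; [now apply top_digits_below | split; [now left | split; [exact Hlk_len|]]].
  split; [now apply bottom_digits_below | split; [now left | split; [exact Hlr_len|]]].
  now apply subset_sum_mod1_digit_splitting.
Qed.

Theorem lemma11p1 (A2 : R -> Prop) (s s' : R) :
  closed_set A2 -> in_unit_interval A2 -> times_p_invariant 2 A2 ->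
  is_hdim A2 s -> 0 < s <= 1 -> 0 <= s' < s ->
  forall eps, 0 < eps ->
  exists (m : nat) (A2' A2'' : R -> Prop) (d' d'' : R),
    (1 <= m)%nat /\
    closed_set A2' /\ in_unit_interval A2' /\ times_p_invariant (2 ^ m) A2' /\
    closed_set A2'' /\ in_unit_interval A2'' /\ times_p_invariant (2 ^ m) A2'' /\
    is_hdim A2' d' /\ is_hdim A2'' d'' /\
    subset_sum_mod1 A2 A2' A2'' /\
    Rabs (d' - s') <= eps /\
    s >= d' + d'' - eps.
Proof.
  intros HAc HAu HAi Hdim Hs Hs' eps Heps.
  set (t := s + eps / 4).
  assert (HHt : H_null t A2) by (apply (H_null_gt_hdim A2 s); [exact Hdim | unfold t; lra]).
  destruct (digit_set_splitting A2 t HAc HAu HAi ltac:(unfold t; lra) HHt) as [c [Hc Hsplit]].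
  destruct (exists_scale_split s s' (4 * (2 * c + 1) / eps) (proj1 Hs) Hs')
    as [k [r [Hm [HmX Hks]]]].
  destruct (Hsplit k r Hm) as [L1 [L2 [HL1 [H01 [Hlen1 [HL2 [H02 [Hlen2 Hsub]]]]]]]].
  pose proof (pos_INR k). pose proof (pos_INR r).
  destruct (digit_set_hdim (k + r) L1 (c + INR k * t) Hm) as [d1 [Hd1 Hd1_le]];
    [unfold t; nra | exact Hlen1 |].
  destruct (digit_set_hdim (k + r) L2 (c + INR r * t) Hm) as [d2 [Hd2 Hd2_le]];
    [unfold t; nra | exact Hlen2 |].
  pose proof (hdim_subset_sum_digit_set_le A2 _ (k + r) L2 (c + INR r * t) s d1 Hm
    ltac:(unfold t; nra) Hlen2 (digit_set_compact _ _) HAu (digit_set_unit _ _) Hsub Hdim Hd1).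
  exists (k + r)%nat, (digit_set (k + r) L1), (digit_set (k + r) L2), d1, d2.
  do 10 (split; [solve [auto using digit_set_closed, digit_set_unit, digit_set_invariant] |]).
  rewrite plus_INR in *. apply (dimension_bookkeeping (INR k + INR r) (INR k) (INR r) s s' eps c);
    auto; try lra.
  apply (Rmult_lt_compat_r eps) in HmX; [|lra].
  now replace (4 * (2 * c + 1) / eps * eps) with (4 * (2 * c + 1)) in HmX by (field; lra).
Qed.
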